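(* Let $V$ be an $n$-dimensional vector space over an algebraically closed field and $V_{\mathbb{P}^1}=\mathcal{O}_{\mathbb{P}^1}\otimes V$. Let $0\to A\to V_{\mathbb{P}^1}\to B\to 0$ be a short exact sequence of vector bundles on $\mathbb{P}^1$, with $k=\operatorname{rank}A$, $r=\operatorname{rank}B$ and $d=\deg B$. If $d=r$, then the image of $\mathbb{P}(A)\to\mathbb{P}(V)$ lies in some hyperplane if and only if $B$ is not isomorphic to $\mathcal{O}_{\mathbb{P}^1}(1)^{\oplus r}$.
   Context: $\mathbb{P}(V)$ denotes the projective space of one-dimensional subspaces of $V$, $\mathbb{P}(A)$ the bundle of lines in $A$, and $\mathbb{P}(A)\to\mathbb{P}(V)$ is induced by the inclusion $A\subset V_{\mathbb{P}^1}$. *)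

From HB Require Import structures.
From mathcomp Require Import all_boot all_order all_algebra.
From mathcomp Require Export mpoly.
Set Implicit Arguments. Unset Strict Implicit. Unset Printing Implicit Defensive.
Import GRing.Theory.
Local Open Scope ring_scope.

(* Model of P^1 over F: homogeneous coordinates (x : y) with (x,y) <> (0,0);
   sections of O(m) on P^1 = binary forms of degree m, i.e. elements of
   {mpoly F[2]} that are m-homogeneous (for mdeg); a negative-degree line
   bundle has only the zero section. *)

Definition P1pt (F : ringType) (x y : F) : 'I_2 -> F :=
  fun i => if val i == 0%N then x else y.

Definition evmx (F : comRingType) (m n : nat)
  (M : 'M[{mpoly F[2]}]_(m, n)) (x y : F) : 'M[F]_(m, n) :=
  map_mx (fun p : {mpoly F[2]} => p.@[P1pt x y]) M.

(* A surjection  O_{P^1} (x) V --> B  with  B = O(b_0) (+) ... (+) O(b_{r-1}),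
   V = F^n (column vectors).  Such a map is an r x n matrix N of forms whose
   j-th row is homogeneous of degree b j; it is a surjection of vector bundles
   iff it is surjective on every fibre, i.e. N(x:y) has rank r at every point. *)
Definition bundle_quotient (F : fieldType) (n r : nat) (b : 'I_r -> nat)
  (N : 'M[{mpoly F[2]}]_(r, n)) : Prop :=
  (forall j i, N j i \is (b j).-homog) /\
  (forall x y : F, (x, y) != (0, 0) -> \rank (evmx N x y) = r).

(* The kernel subbundle A: its fibre at (x:y) is ker N(x:y) in V. *)
Definition fibreA (F : fieldType) (n r : nat) (N : 'M[{mpoly F[2]}]_(r, n))
  (x y : F) : pred 'cV[F]_n :=
  fun v => evmx N x y *m v == 0.

(* The image of P(A) -> P(V) (the union of the lines of all fibres A_p) lies
   in a hyperplane {v | phi v = 0}, phi a nonzero linear form on V. *)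
Definition imageA_in_hyperplane (F : fieldType) (n r : nat)
  (N : 'M[{mpoly F[2]}]_(r, n)) : Prop :=
  exists phi : 'rV[F]_n, phi != 0 /\
    forall x y : F, (x, y) != (0, 0) ->
      forall v : 'cV[F]_n, v \in fibreA N x y -> phi *m v = 0.

(* B = (+)_j O(b j) is isomorphic to O(1)^(+r): there are bundle maps
   T : (+)_j O(b j) -> O(1)^r  (entry (i,j) a section of O(1 - b j)) and
   S : O(1)^r -> (+)_j O(b j)  (entry (j,i) a section of O(b j - 1))
   that are mutually inverse. *)
Definition iso_to_O1_sum (F : fieldType) (r : nat) (b : 'I_r -> nat) : Prop :=
  exists T S : 'M[{mpoly F[2]}]_r,
    (forall i j, if (b j <= 1)%N then T i j \is (1 - b j)%N.-homog
                 else T i j == 0) /\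
    (forall j i, if (1 <= b j)%N then S j i \is (b j - 1)%N.-homog
                 else S j i == 0) /\
    S *m T = 1%:M /\ T *m S = 1%:M.

From HB Require Import structures.
From mathcomp Require Import all_boot all_order all_algebra.
From mathcomp Require Import mpoly.
Set Implicit Arguments. Unset Strict Implicit. Unset Printing Implicit Defensive.
Import GRing.Theory.
Local Open Scope ring_scope.

(* The degrees b j are natural numbers summing to r, so either some summand
   of B is trivial or B = O(1)^r.  A trivial summand O gives a row of
   N that is a constant nonzero linear form on V, and it kills every fibre of
   A; it also forbids an isomorphism with O(1)^r, which has no nonzero map to
   O.  If B = O(1)^r, then on the affine chart (1:t) the fibre of N is the
   pencil N0 + t N1 of full-rank matrices, and a linear form phi vanishing on
   every fibre of A lies in the row space of every N0 + t N1.  Cramer's rule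
   turns this into polynomial vectors w_f with w_f (N0 + X N1) = D_f phi,
   D_f the maximal minors of N0 + X N1.  These have no common zero, so a
   Bezout combination gives w (N0 + X N1) = lam phi with lam a nonzero
   constant; comparing coefficients from the top down (N1 is injective on row
   vectors) forces w = 0, hence phi = 0. *)

Lemma meval_dhomog0 (R : comNzRingType) k (p : {mpoly R[k]}) (v w : 'I_k -> R) :
  p \is 0.-homog -> p.@[v] = p.@[w].
Proof.
move=> /dhomogP p0; rewrite !mevalE; apply: eq_big_seq => m mp.
have /eqP -> : m == 0%MM by rewrite -mdeg_eq0 p0.
by rewrite !big1 // => i _; rewrite mnm0E expr0.
Qed.

Lemma meval_dhomog1_P1pt (R : comNzRingType) (p : {mpoly R[2]}) (x y : R) :
  p \is 1.-homog -> p.@[P1pt x y] = x * p.@[P1pt 1 0] + y * p.@[P1pt 0 1].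
Proof.
move=> /dhomogP p1; rewrite !mevalE !big_distrr -big_split /=.
apply: eq_big_seq => m mp.
have /mdeg1P [i /eqP ->] : mdeg m == 1%N by rewrite p1.
rewrite !big_ord_recl !big_ord0 !mulr1 !mnmE.
case: i => [[|[|//]] ?]; rewrite /P1pt /= !expr1 !expr0;
  by rewrite ?(mulr1, mul1r, mulr0, mul0r, addr0, add0r) mulrC.
Qed.

Lemma closed_poly_eq0 (F : closedFieldType) (p : {poly F}) :
  (forall t, p.[t] = 0) -> p = 0.
Proof.
move=> p0; apply/eqP; apply: contraT => pN0.
have : size (p * 'X + 1) != 1%N.
  rewrite size_polyDl; rewrite size_mulX // ?size_poly1 ?ltnS ?size_poly_gt0 //.
  by rewrite eqSS size_poly_eq0.
move=> /closed_rootP [x]; rewrite /root !hornerE p0 mul0r add0r.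
by rewrite oner_eq0.
Qed.

Lemma closed_map_mx_horner_inj (F : closedFieldType) m n
    (A B : 'M[{poly F}]_(m, n)) :
  (forall t, map_mx (horner_eval t) A = map_mx (horner_eval t) B) -> A = B.
Proof.
move=> AB; apply/matrixP => i j; apply/eqP; rewrite -subr_eq0; apply/eqP.
apply: closed_poly_eq0 => t; apply/eqP; rewrite !hornerE subr_eq0.
by have /matrixP /(_ i j) := AB t; rewrite !mxE /horner_eval => ->.
Qed.

Lemma kernel_annihilator_submx (F : fieldType) m n (A : 'M[F]_(m, n))
    (u : 'rV[F]_n) :
  (forall v : 'cV_n, A *m v = 0 -> u *m v = 0) -> (u <= A)%MS.
Proof.
move=> Au; rewrite submxE; apply/eqP/matrixP => i j.
have := Au (col j (cokermx A)).
rewrite colEsub !mulmx_colsub mulmx_coker -!colEsub.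
have -> : col j (0 : 'M[F]_(m, n)) = 0 by apply/matrixP => ? ?; rewrite !mxE.
by move=> /(_ erefl) /matrixP /(_ i 0); rewrite !mxE.
Qed.

Lemma row_free_minor (F : fieldType) m n (A : 'M[F]_(m, n)) :
  row_free A -> exists f : 'I_n ^ m, \det (colsub f A) != 0.
Proof.
move=> freeA; have fullAT : row_full A^T by rewrite /row_full mxrank_tr.
exists (fullrankfun fullAT).
have := fullrowsub_unit fullAT; rewrite unitmxE unitfE.
by rewrite -det_tr trmx_mxsub trmxK.
Qed.

Lemma row_free_row_neq0 (F : fieldType) m n (A : 'M[F]_(m, n)) (i : 'I_m) :
  row_free A -> row i A != 0.
Proof.
move=> freeA; apply/eqP => Ai0.
have /matrixP /(_ 0 i) : delta_mx 0 i = 0 :> 'rV[F]_m.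
  by apply: (row_free_inj freeA); rewrite mul0mx -rowE.
by rewrite !mxE !eqxx => /eqP; rewrite oner_eq0.
Qed.

Lemma bezout_big_gcdp (F : fieldType) (I : eqType) (P : I -> {poly F})
    (s : seq I) :
  uniq s ->
  exists c : I -> {poly F}, \sum_(i <- s) c i * P i %= \big[@gcdp F/0]_(i <- s) P i.
Proof.
elim: s => [_|i s IHs]; first by exists (fun=> 0); rewrite !big_nil eqpxx.
move=> /andP [i_s uniq_s]; have [c cP] := IHs uniq_s.
have [[u1 u2] uP] := Bezoutp (P i) (\sum_(j <- s) c j * P j).
exists (fun j => if j == i then u1 else u2 * c j).
rewrite !big_cons eqxx.
have -> : \sum_(j <- s) (if j == i then u1 else u2 * c j) * P j
          = u2 * \sum_(j <- s) c j * P j.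
  rewrite mulr_sumr; apply: eq_big_seq => j js.
  have /negbTE -> : j != i by apply: contraNneq i_s => <-.
  by rewrite mulrA.
by apply: eqp_trans uP _; apply: eqp_gcdr.
Qed.

Lemma sum_eq_card_all1 r (b : 'I_r -> nat) :
  (\sum_(j < r) b j = r)%N -> (forall j, 0 < b j)%N -> forall j, b j = 1%N.
Proof.
move=> sum_b b_pos.
have sum_pred : (\sum_(j < r) b j = \sum_(j < r) 1 + \sum_(j < r) (b j).-1)%N.
  by rewrite -big_split; apply: eq_bigr => j _; rewrite /= add1n prednK.
move: sum_b; rewrite sum_pred sum1_card card_ord => /(congr1 (subn^~ r)).
rewrite addKn subnn => /eqP; rewrite sum_nat_eq0 => /forallP b1 j.
by rewrite -(prednK (b_pos j)) (eqP (b1 j)).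
Qed.

Section Pencil.

Variables (F : closedFieldType) (r n : nat) (N0 N1 : 'M[F]_(r, n)).

Local Notation M := (map_mx polyC N0 + 'X *: map_mx polyC N1).

Lemma horner_pencil t : map_mx (horner_eval t) M = N0 + t *: N1.
Proof. by apply/matrixP => i j; rewrite !mxE /horner_eval !hornerE. Qed.

Lemma coef_mul_pencil (w : 'rV[{poly F}]_r) k :
  map_mx (coefp k.+1) (w *m M)
    = map_mx (coefp k.+1) w *m N0 + map_mx (coefp k) w *m N1.
Proof.
apply/rowP => j; rewrite !mxE /coefp coef_sum -big_split; apply: eq_bigr => i _.
by rewrite !mxE mulrDr coefD coefMC mulrA coefMC coefMX.
Qed.

Lemma pencil_coef_eq0 (w : 'rV[{poly F}]_r) :
  row_free N1 -> (forall k, map_mx (coefp k.+1) (w *m M) = 0) -> w = 0.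
Proof.
move=> /row_free_inj N1_inj wM0.
pose K := \max_(i < r) size (w ord0 i).
suff w_coef0 m k : (K <= k + m)%N -> map_mx (coefp k) w = 0.
  apply/matrixP => i j; apply/polyP => k; rewrite [i]ord1 !mxE coef0.
  by have /rowP /(_ j) := w_coef0 K k (leq_addl _ _); rewrite !mxE.
elim: m k => [|m IHm] k; rewrite ?addn0 ?addnS => Kk.
  apply/rowP => i; rewrite !mxE /coefp nth_default //.
  exact: leq_trans (leq_bigmax i) Kk.
apply: N1_inj; have := coef_mul_pencil w k.
by rewrite wM0 IHm -?addSnnS // mul0mx add0r mul0mx => <-.
Qed.

Lemma pencil_minors_bezout :
  (forall t, row_free (N0 + t *: N1)) ->
  exists (c : 'I_n ^ r -> {poly F}) (lam : F),
    lam != 0 /\ \sum_f c f * \det (colsub f M) = lam%:P.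
Proof.
move=> N_free; pose D (f : 'I_n ^ r) := \det (colsub f M).
have [c cD] := bezout_big_gcdp D (index_enum_uniq {ffun 'I_r -> 'I_n}).
exists c; suff : size (\big[@gcdp F/0]_f D f) == 1%N.
  by rewrite -(eqp_size cD) => /size_poly1P [lam lam0 ->]; exists lam.
apply/negPn/negP => /closed_rootP [t].
rewrite -(big_map D xpredT (fun p => p)) root_biggcd => /allP gt0.
have [f] := row_free_minor (N_free t).
apply/negP; rewrite negbK -horner_pencil -map_mxsub det_map_mx.
exact: gt0 (map_f D (mem_index_enum f)).
Qed.

Lemma pencil_rowspace_eq0 (phi : 'rV[F]_n) :
  (forall t, row_free (N0 + t *: N1)) -> row_free N1 ->
  (forall t, (phi <= (N0 + t *: N1)%R)%MS) -> phi = 0.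
Proof.
move=> N_free N1_free phiN; pose Phi := map_mx (@polyC F) phi.
have horner_const m k (A : 'M[F]_(m, k)) t :
    map_mx (horner_eval t) (map_mx polyC A) = A.
  by apply/matrixP => i j; rewrite !mxE /horner_eval hornerC.
(* Cramer's rule, checked at each t, where phi = u (N0 + t N1). *)
have cramer f : colsub f Phi *m \adj (colsub f M) *m M
                = \det (colsub f M) *: Phi.
  apply: closed_map_mx_horner_inj => t.
  rewrite !map_mxM map_mxZ map_mx_adj -det_map_mx !map_mxsub horner_pencil.
  rewrite horner_const; have /submxP [u ->] := phiN t.
  rewrite -mulmx_colsub -!mulmxA (mulmxA (colsub _ _)) mul_mx_adj.
  by rewrite mul_scalar_mx -scalemxAr.
have [c [lam [lam0 cD]]] := pencil_minors_bezout N_free.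
pose w := \sum_f c f *: (colsub f Phi *m \adj (colsub f M)).
have wM : w *m M = lam%:P *: Phi.
  rewrite mulmx_suml -cD scaler_suml; apply: eq_bigr => f _.
  by rewrite -scalemxAl cramer scalerA.
have w0 : w = 0.
  apply: (pencil_coef_eq0 N1_free) => k; rewrite wM; apply/matrixP => i j.
  by rewrite !mxE /coefp -polyCM coefC.
suff /eqP : lam *: phi = 0 by rewrite scalemx_eq0 (negbTE lam0) => /eqP.
apply/rowP => j; have /rowP /(_ j) := wM; rewrite w0 mul0mx !mxE -polyCM.
by move=> /(congr1 (coefp 0)); rewrite /coefp coefC coef0.
Qed.

End Pencil.

Lemma iso_to_O1_sum_all1 (F : fieldType) r (b : 'I_r -> nat) :
  (forall j, b j = 1%N) -> iso_to_O1_sum F b.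
Proof.
move=> b1; exists 1%:M, 1%:M; rewrite mulmx1.
have id_homog (i j : 'I_r) : (1%:M : 'M[{mpoly F[2]}]_r) i j \is 0.-homog.
  by rewrite mxE; case: eqP => _; [exact: dhomog1 | exact: dhomog0].
by split; [|split; [|done]] => i j; rewrite b1; apply: id_homog.
Qed.

Lemma not_iso_to_O1_sum_deg0 (F : fieldType) r (b : 'I_r -> nat) (j : 'I_r) :
  b j = 0%N -> ~ iso_to_O1_sum F b.
Proof.
move=> bj0 [T [S [_ [S0 [ST _]]]]].
have := congr1 (fun A : 'M_r => A j j) ST; rewrite !mxE eqxx big1.
  by move/eqP; rewrite eq_sym oner_eq0.
by move=> i _; have := S0 j i; rewrite bj0 /= => /eqP ->; rewrite mul0r.
Qed.

Lemma affine_pt_neq0 (F : nzRingType) (t : F) : (1, t) != (0, 0) :> F * F.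
Proof. by rewrite xpair_eqE oner_eq0. Qed.

Section DegreeOneQuotient.

Variables (F : closedFieldType) (n r : nat) (b : 'I_r -> nat)
  (N : 'M[{mpoly F[2]}]_(r, n)).
Hypothesis NB : bundle_quotient b N.

Lemma imageA_in_hyperplane_deg0 (j : 'I_r) :
  b j = 0%N -> imageA_in_hyperplane N.
Proof.
case: NB => [N_homog N_rank] bj0.
exists (row j (evmx N 1 0)); split.
  by apply: row_free_row_neq0; rewrite /row_free N_rank ?affine_pt_neq0.
move=> x y xy v; rewrite /fibreA unfold_in => /eqP Av0.
have -> : row j (evmx N 1 0) = row j (evmx N x y).
  apply/rowP => k; rewrite !mxE; apply: meval_dhomog0.
  by have := N_homog j k; rewrite bj0.
by rewrite -row_mul Av0; apply/rowP => k; rewrite !mxE.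
Qed.

Lemma not_imageA_in_hyperplane_all1 :
  (forall j, b j = 1%N) -> ~ imageA_in_hyperplane N.
Proof.
case: NB => [N_homog N_rank] b1 [phi [phi0 phiA]].
have N_affine t : evmx N 1 t = evmx N 1 0 + t *: evmx N 0 1.
  apply/matrixP => i k; rewrite !mxE meval_dhomog1_P1pt ?mul1r //.
  by have := N_homog i k; rewrite b1.
move/eqP: phi0; apply.
apply: (@pencil_rowspace_eq0 _ _ _ (evmx N 1 0) (evmx N 0 1)) => [t||t].
- by rewrite -N_affine /row_free N_rank ?affine_pt_neq0.
- by rewrite /row_free N_rank // xpair_eqE oner_eq0 andbF.
- rewrite -N_affine; apply: kernel_annihilator_submx => v Av0.
  by apply: (phiA 1 t (affine_pt_neq0 t)); rewrite /fibreA unfold_in Av0.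
Qed.

End DegreeOneQuotient.

Theorem proposition4p1 (F : closedFieldType) (n r : nat) (b : 'I_r -> nat)
  (N : 'M[{mpoly F[2]}]_(r, n)) :
  bundle_quotient b N ->
  let d := (\sum_(j < r) b j)%N in
  d = r ->
  (imageA_in_hyperplane N <-> ~ @iso_to_O1_sum F r b).
Proof.
move=> NB /= sum_b.
have [j /eqP bj0 | b_pos] := pickP (fun j => b j == 0%N).
  split=> _; first exact: not_iso_to_O1_sum_deg0 bj0.
  exact: (imageA_in_hyperplane_deg0 NB bj0).
have b1 : forall j, b j = 1%N.
  by apply: (sum_eq_card_all1 sum_b) => j; rewrite lt0n b_pos.
split=> [imA _ | not_iso]; first exact: (not_imageA_in_hyperplane_all1 NB b1 imA).
by case: not_iso; exact: iso_to_O1_sum_all1.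
Qed.
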